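(* Let $R=S(M_0)$ and $L=\mathcal{A}M_{-1}=S(M_0)\otimes M_{-1}$, viewed as an $R$-module via $\mathbf y\cdot(\mathbf y'\odot x^{\mathbf k})=\mathbf y\odot\mathbf y'\odot x^{\mathbf k}$. Equip $L$ with the bilinear product $\rhd$, with $\nabla\colon L\to \mathrm{End}_{\mathbb K}(L)$, $\nabla_X Y=X\rhd Y$, and with the anchor $\rho\colon L\to \mathrm{Der}_{\mathbb K}(S(M_0),S(M_0))$, $\rho(X)(\mathbf y)=X\rhd \mathbf y$. Then $(L,\nabla,\rho)$ is a pre-Lie-Rinehart algebra over $R$, the Lie bracket being $[X,Y]=X\rhd Y-Y\rhd X$.
   Context: Fix a field $\mathbb K$ and a finite set $C$ of decorations. Let $\overline N(C)$ be the commutative polynomial algebra over $\mathbb K$ in the variables $x^a_j$, $a\in C$, $j\in\{-1,0,1,2,\dots\}$. A monomial is $x^{\mathbf k}=\prod_{j,a}(x^a_j)^{k^a_j}$ with finitely supported nonnegative integer exponents; its weight is $\mathrm{wt}(x^{\mathbf k})=\sum_{j,a} j\,k^a_j$. Let $\partial$ be the derivation of $\overline N(C)$ with $\partial x^a_j=x^a_{j+1}$. For $n\in\{-1,0\}$ let $M_n$ be the span of the monomials of weight $n$ (non-constant ones for $n=0$). $S(V)$ denotes the symmetric algebra of $V$, with product $\odot$ and unit $\mathbf 1$; elements of $S(M_0)$ are called multiaromas. Elements of $\mathcal{A}M_{-1}$ are spanned by $\mathbf y\odot x^{\mathbf k}$ with $\mathbf y\in S(M_0)$ a product of monomials and $x^{\mathbf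 k}\in M_{-1}$. The product $\rhd$ is defined (and extended bilinearly) as follows. For monomials $x^{\mathbf k}\in M_{-1}$ and $P\in M_0\cup M_{-1}$, $x^{\mathbf k}\rhd P=x^{\mathbf k}\cdot\partial P$ (product in $\overline N(C)$). For $\mathbf y=x^{\kappa^1}\odot\cdots\odot x^{\kappa^m}\in S(M_0)$: $x^{\mathbf k}\rhd \mathbf y=\sum_{i=1}^m x^{\kappa^1}\odot\cdots\odot (x^{\mathbf k}\rhd x^{\kappa^i})\odot\cdots\odot x^{\kappa^m}$ and $(\mathbf y^1\odot x^{\mathbf k})\rhd \mathbf y=\mathbf y^1\odot(x^{\mathbf k}\rhd\mathbf y)$. Finally $(\mathbf y^1\odot x^{\mathbf k^1})\rhd(\mathbf y^2\odot x^{\mathbf k^2})=\mathbf y^1\odot(x^{\mathbf k^1}\rhd\mathbf y^2)\odot x^{\mathbf k^2}+\mathbf y^1\odot\mathbf y^2\odot(x^{\mathbf k^1}\rhd x^{\mathbf k^2})$. Definition: given a unital commutative $\mathbb K$-algebra $R$ and an $R$-module $L$ with an $R$-linear map $\rho\colon L\to\mathrm{Der}_{\mathbb K}(R,R)$ and a map $\nabla\colon L\to\mathrm{End}_{\mathbb K}(L)$, write $X\rhd Y=\nabla_XY$ and $[X,Y]=X\rhd Y-Y\rhd X$. Then $L$ is a pre-Lie-Rinehart algebra if: $(L,[-,-])$ is a Lie algebra over $\mathbb K$; $\rho$ is a Lie algebra homomorphism; for $f\in R$, $X,Y\in L$, $[X,fY]=(\rho(X)f)Y+f[X,Y]$; and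 $(L,\rhd)$ is pre-Lie: $X\rhd(Y\rhd Z)-(X\rhd Y)\rhd Z=Y\rhd(X\rhd Z)-(Y\rhd X)\rhd Z$. *)

From HB Require Import structures.
From mathcomp Require Import all_boot all_order all_algebra.
From mathcomp Require Import finmap.
From mathcomp.multinomials Require Import monalg.

Set Implicit Arguments.
Unset Strict Implicit.
Unset Printing Implicit Defensive.

Import Order.TTheory GRing.Theory Num.Theory.
Local Open Scope ring_scope.

Section PreLieRinehart.
Variables (K : fieldType) (R : comAlgType K) (L : lmodType R).

Definition Kscale (a : K) (v : L) : L := (a%:A : R) *: v.

Definition is_Kderivation (D : R -> R) : Prop :=
  (forall (a : K) (f g : R), D (a *: f + g) = a *: D f + D g) /\
  (forall f g : R, D (f * g) = D f * g + f * D g).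

Definition bracket (nabla : L -> L -> L) (X Y : L) : L := nabla X Y - nabla Y X.

Record pre_Lie_Rinehart (rho : L -> R -> R) (nabla : L -> L -> L) : Prop := {
  plr_rho_der : forall X, is_Kderivation (rho X);
  plr_rho_Rlinear : forall (f : R) (X Y : L) (g : R),
      rho (f *: X + Y) g = f * rho X g + rho Y g;
  plr_nabla_Klinear : forall X (a : K) Y Z,
      nabla X (Kscale a Y + Z) = Kscale a (nabla X Y) + nabla X Z;
  plr_bracket_linl : forall (a : K) X Y Z,
      bracket nabla (Kscale a X + Y) Z
      = Kscale a (bracket nabla X Z) + bracket nabla Y Z;
  plr_bracket_linr : forall (a : K) X Y Z,
      bracket nabla X (Kscale a Y + Z)
      = Kscale a (bracket nabla X Y) + bracket nabla X Z;
  plr_bracket_alt : forall X, bracket nabla X X = 0;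
  plr_bracket_Jacobi : forall X Y Z,
      bracket nabla X (bracket nabla Y Z) + bracket nabla Y (bracket nabla Z X)
      + bracket nabla Z (bracket nabla X Y) = 0;
  plr_rho_Lie : forall X Y (f : R),
      rho (bracket nabla X Y) f = rho X (rho Y f) - rho Y (rho X f);
  plr_Leibniz : forall X (f : R) Y,
      bracket nabla X (f *: Y) = rho X f *: Y + f *: bracket nabla X Y;
  plr_preLie : forall X Y Z,
      nabla X (nabla Y Z) - nabla (nabla X Y) Z
      = nabla Y (nabla X Z) - nabla (nabla Y X) Z
}.

End PreLieRinehart.

(* The variable x^a_j (a in C, j >= -1) is encoded as the pair (a, n) with   *)
(* j = n - 1.                                                                *)
Definition var (C : finType) : choiceType := (C * nat)%type.

Notation mon C := {cmonom (var C)}.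

Notation Nbar K C := {malg K[mon C]}.

Definition wt (C : finType) (m : mon C) : int :=
  \sum_(v <- finsupp m) (m v)%:Z * ((v.2)%:Z - 1).

Definition is_M0mon (C : finType) (m : mon C) : bool :=
  (wt m == 0) && (m != @onecm (var C)).
Definition is_Mm1mon (C : finType) (m : mon C) : bool := wt m == -1.

Definition M0mon (C : finType) := {m : mon C | is_M0mon m}.
Definition Mm1mon (C : finType) := {m : mon C | is_Mm1mon m}.

(* R = S(M_0): polynomial algebra on the monomial basis of M_0; its product
   is the symmetric product (.) and its unit is 1 *)
Notation multiaroma K C := {malg K[{cmonom (M0mon C)}]}.

(* L = A M_{-1} = S(M_0) (x) M_{-1}: the free S(M_0)-module on the monomial
   basis of M_{-1}; << y *g x^k >> stands for y (.) x^k *)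
Notation AM K C := {malg (multiaroma K C)[Mm1mon C]}.

Section Products.
Variables (K : fieldType) (C : finType).

Definition shiftv (v : var C) : var C := (v.1, v.2.+1).

Definition dmon (m : mon C) : Nbar K C :=
  \sum_(v <- finsupp m) << mulcm (divcm m (ucm v)) (ucm (shiftv v)) >> *+ m v.

Definition deriv (p : Nbar K C) : Nbar K C :=
  \sum_(m <- msupp p) p@_m *: dmon m.

(* M_0 -> S(M_0) (inclusion as degree one part; used on elements of M_0) *)
Definition toS1 (p : Nbar K C) : multiaroma K C :=
  \sum_(m <- msupp p)
     p@_m *: (if (insub m : option (M0mon C)) is Some m0 then << ucm m0 >>
              else 0).

(* M_{-1} -> A M_{-1}, x^k |-> 1 (.) x^k (used on elements of M_{-1}) *)
Definition toL1 (p : Nbar K C) : AM K C :=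
  \sum_(m <- msupp p)
     (if (insub m : option (Mm1mon C)) is Some m1 then << (p@_m)%:A *g m1 >>
      else 0).

Definition act_mon0 (k : Mm1mon C) (kappa : M0mon C) : multiaroma K C :=
  toS1 (<< val k >> * deriv << val kappa >>).

Definition act_aroma (k : Mm1mon C) (y : {cmonom (M0mon C)}) : multiaroma K C :=
  \sum_(kappa <- finsupp y) (<< divcm y (ucm kappa) >> * act_mon0 k kappa) *+ y kappa.

Definition act_S (k : Mm1mon C) (f : multiaroma K C) : multiaroma K C :=
  \sum_(y <- msupp f) f@_y *: act_aroma k y.

Definition rhoAM (X : AM K C) (f : multiaroma K C) : multiaroma K C :=
  \sum_(k <- msupp X) X@_k * act_S k f.

Definition act_mon1 (k1 k2 : Mm1mon C) : AM K C :=
  toL1 (<< val k1 >> * deriv << val k2 >>).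

Definition nablaAM (X Y : AM K C) : AM K C :=
  \sum_(k1 <- msupp X) \sum_(k2 <- msupp Y)
     X@_k1 *: (<< act_S k1 Y@_k2 *g k2 >> + Y@_k2 *: act_mon1 k1 k2).

End Products.

From Pilot Require Import Defs.
From HB Require Import structures.
From mathcomp Require Import all_boot all_order all_algebra.
From mathcomp Require Import finmap.
From mathcomp.multinomials Require Import monalg.
From mathcomp Require Import zify ring.

Set Implicit Arguments.
Unset Strict Implicit.
Unset Printing Implicit Defensive.

Import GRing.Theory.
Local Open Scope fset_scope.
Local Open Scope ring_scope.
Local Notation "1" := (@mone _) : monom_scope.
Local Notation "x * y" := (mmul x y) : monom_scope.

(* The module A M_{-1} is free over R = S(M_0) on the monomials x^k of M_{-1}, and
   rho and |> are determined by the K-derivations D_k = x^k |> - of R together with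
   the products x^a |> x^b of basis vectors: rho is R-linear, and |> is R-linear on
   the left and a connection on the right. For any such data the associator
   X |> (Y |> Z) - (X |> Y) |> Z and the defect rho(X)(rho(Y) h) - rho(X |> Y) h are
   R-linear in X and Y, and scaling Z only adds terms symmetric in X and Y, so
   pre-Lie symmetry reduces to basis vectors. There both quantities come from the
   identity x^a d(x^b d z) - (x^a d x^b) d z = x^a x^b d^2 z of Nbar(C), which is
   symmetric in a and b; for the defect one also uses that a K-derivation of S(M_0)
   is determined by its values on generators. Monomials of the wrong weight never
   contribute, since multiplication by x^a and d shift the weight by -1 and +1. *)

Lemma subrDl (V : zmodType) (x y z : V) : x + y - (x + z) = y - z.
Proof. by rewrite opprD addrACA subrr add0r. Qed.

Lemma subr_swap (V : zmodType) (a b c d : V) : a - b = c - d -> b - d = a - c.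
Proof. by move=> e; rewrite -[a](subrK b) e addrAC [c - d]addrC addrK addrC. Qed.

Lemma mulrnA_mulrAC (R : comPzSemiRingType) (x y z : R) n :
  (x * y * z) *+ n = (x * z) *+ n * y.
Proof. by rewrite mulrnAl mulrAC. Qed.

(** * Linear extensions on free modules *)

Section LinearExtension.
Variables (I : choiceType) (G W : zmodType) (F : I -> G -> W).
Hypothesis F_additive : forall k, {morph F k : x y / x - y}.

Definition mext (g : {malg G[I]}) : W := \sum_(k <- msupp g) F k g@_k.

Lemma mextEw (d : {fset I}) g :
  msupp g `<=` d -> mext g = \sum_(k <- d) F k g@_k.
Proof.
move=> le_gd; rewrite /mext (big_fset_incl _ le_gd) // => k _ /mcoeff_outdom ->.
by rewrite -(subrr 0) F_additive subrr.
Qed.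

Lemma mextU c k : mext << c *g k >> = F k c.
Proof. by rewrite (mextEw msuppU_le) big_seq_fset1 mcoeffUU. Qed.

Lemma mext0 : mext 0 = 0.
Proof. by rewrite /mext msupp0 big_seq_fset0. Qed.

Lemma mextB : {morph mext : g1 g2 / g1 - g2}.
Proof.
move=> g1 g2; rewrite (mextEw (msuppB_le g1 g2)).
rewrite (mextEw (fsubsetUl _ (msupp g2))) (mextEw (fsubsetUr (msupp g1) _)).
by rewrite -sumrB; apply: eq_bigr => k _; rewrite mcoeffB F_additive.
Qed.

Lemma mextN g : mext (- g) = - mext g.
Proof. by rewrite -[- g]sub0r mextB mext0 sub0r. Qed.

Lemma mextD : {morph mext : g1 g2 / g1 + g2}.
Proof. by move=> g1 g2; rewrite -[g2]opprK mextB mextN !opprK. Qed.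

End LinearExtension.

Lemma malg_ind (I : choiceType) (G : zmodType) (P : {malg G[I]} -> Prop) :
  P 0 -> (forall g1 g2, P g1 -> P g2 -> P (g1 + g2)) ->
  (forall c k, P << c *g k >>) -> forall g, P g.
Proof. by move=> P0 PD PU g; rewrite (monalgE g); apply: big_ind. Qed.

Lemma monalgUZ (I : choiceType) (R : nzRingType) (c : R) (k : I) :
  << c *g k >> = c *: << k >>.
Proof. by apply/malgP => k'; rewrite mcoeffZ !mcoeffU mulrnAr mulr1. Qed.

Lemma malgUM (R : nzRingType) (M : monomType) (m1 m2 : M) :
  << (m1 * m2)%M >> = << m1 >> * << m2 >> :> {malg R[M]}.
Proof. by rewrite malgM_def fgmulUU mulr1. Qed.

Lemma scale_malgU (I : choiceType) (R : nzRingType) (a c : R) (k : I) :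
  a *: << c *g k >> = << a * c *g k >>.
Proof. by apply/malgP => k'; rewrite mcoeffZ !mcoeffU mulrnAr. Qed.

Section ScaledLinearExtension.
Variables (I : choiceType) (R : nzRingType) (W : zmodType) (s : R -> W -> W).
Hypothesis s_additive : forall a, {morph s a : x y / x + y}.
Variable F : I -> R -> W.
Hypothesis F_additive : forall k, {morph F k : x y / x - y}.
Hypothesis F_scale : forall k a c, F k (a * c) = s a (F k c).

Lemma mextZ a (g : {malg R[I]}) : mext F (a *: g) = s a (mext F g).
Proof.
have s0 : s a 0 = 0 by apply: (addrI (s a 0)); rewrite -s_additive !addr0.
elim/malg_ind: g => [|g1 g2 IH1 IH2|c k].
- by rewrite scaler0 mext0 s0.
- by rewrite scalerDr !(mextD F_additive) IH1 IH2 s_additive.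
by rewrite [in LHS]monalgUZ scalerA -monalgUZ !(mextU F_additive) F_scale.
Qed.

Lemma mext_linear a g1 g2 : mext F (a *: g1 + g2) = s a (mext F g1) + mext F g2.
Proof. by rewrite mextD // mextZ. Qed.

End ScaledLinearExtension.

Lemma malg_lin_eq (I : choiceType) (R : nzRingType) (W : zmodType)
    (s : R -> W -> W) (F1 F2 : {malg R[I]} -> W) :
  (forall w, s 1 w = w) ->
  (forall a p q, F1 (a *: p + q) = s a (F1 p) + F1 q) ->
  (forall a p q, F2 (a *: p + q) = s a (F2 p) + F2 q) ->
  (forall k, F1 << k >> = F2 << k >>) -> F1 =1 F2.
Proof.
move=> s1 F1_lin F2_lin eqU.
have linear0 F : (forall a p q, F (a *: p + q) = s a (F p) + F q) -> F 0 = 0.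
  move=> F_lin; have := F_lin 1 0 0; rewrite scale1r addr0 s1 => F00.
  by apply: (addrI (F 0)); rewrite addr0 -F00.
have linearD F : (forall a p q, F (a *: p + q) = s a (F p) + F q) ->
    {morph F : p q / p + q}.
  by move=> F_lin p q; rewrite -{1}[p]scale1r F_lin s1.
elim/malg_ind => [|p q IHp IHq|c k].
- by rewrite !linear0.
- by rewrite !linearD // IHp IHq.
by rewrite monalgUZ -[_ *: _]addr0 F1_lin F2_lin eqU !linear0.
Qed.

Lemma malg_symmetric (I : choiceType) (G W : zmodType)
    (B : {malg G[I]} -> {malg G[I]} -> W) :
  (forall Y, {morph B^~ Y : X1 X2 / X1 + X2}) ->
  (forall X, {morph B X : Y1 Y2 / Y1 + Y2}) ->
  (forall c1 c2 k1 k2, B << c1 *g k1 >> << c2 *g k2 >> = B << c2 *g k2 >> << c1 *g k1 >>) ->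
  forall X Y, B X Y = B Y X.
Proof.
move=> BDl BDr symU.
have B0l Y : B 0 Y = 0 by apply: (addrI (B 0 Y)); rewrite -BDl !addr0.
have B0r X : B X 0 = 0 by apply: (addrI (B X 0)); rewrite -BDr !addr0.
elim/malg_ind => [|X1 X2 IH1 IH2|c1 k1] Y; first by rewrite B0l B0r.
  by rewrite BDl BDr IH1 IH2.
elim/malg_ind: Y => [|Y1 Y2 IH1 IH2|c2 k2]; first by rewrite B0l B0r.
  by rewrite BDl BDr IH1 IH2.
exact: symU.
Qed.

(** * Derivations *)

Section Derivations.
Variables (K : fieldType) (R : comAlgType K) (D : R -> R).
Hypothesis dD : is_Kderivation D.

Lemma derivation_linear a f g : D (a *: f + g) = a *: D f + D g.
Proof. by case: dD. Qed.

Lemma derivationM f g : D (f * g) = D f * g + f * D g.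
Proof. by case: dD. Qed.

Lemma derivation0 : D 0 = 0.
Proof.
have := derivation_linear 1 0 0; rewrite !scale1r addr0 => D00.
by apply: (addrI (D 0)); rewrite addr0 -D00.
Qed.

Lemma derivationD : {morph D : f g / f + g}.
Proof. by move=> f g; rewrite -{1}[f]scale1r derivation_linear scale1r. Qed.

Lemma derivationZ a f : D (a *: f) = a *: D f.
Proof. by rewrite -[a *: f]addr0 derivation_linear derivation0 addr0. Qed.

Lemma derivationB : {morph D : f g / f - g}.
Proof. by move=> f g; rewrite -scaleN1r derivationD derivationZ scaleN1r. Qed.

Lemma derivation1 : D 1 = 0.
Proof.
have := derivationM 1 1; rewrite !mulr1 mul1r => D11.
by apply: (addrI (D 1)); rewrite addr0 -D11.
Qed.

Lemma derivation_alg a : D a%:A = 0.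
Proof. by rewrite derivationZ derivation1 scaler0. Qed.

Lemma derivationM_defect a b x : a * D (b * x) - a * D b * x = a * b * D x.
Proof. by rewrite derivationM mulrDr mulrA addrC addKr mulrA. Qed.

End Derivations.

Lemma derivation_ext (K : fieldType) (R : comAlgType K) (D1 D2 : R -> R) :
  D1 =1 D2 -> is_Kderivation D2 -> is_Kderivation D1.
Proof. by move=> eqD [D_lin DM]; split=> *; rewrite !eqD. Qed.

Lemma derivation_commutator (K : fieldType) (R : comAlgType K) (D1 D2 : R -> R) :
  is_Kderivation D1 -> is_Kderivation D2 ->
  is_Kderivation (fun f => D1 (D2 f) - D2 (D1 f)).
Proof.
move=> dD1 dD2; split=> [a f g|f g].
  rewrite (derivation_linear dD2) (derivation_linear dD1).
  rewrite (derivation_linear dD1) (derivation_linear dD2).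
  by rewrite scalerBr opprD addrACA.
rewrite (derivationM dD2) (derivationM dD1) !(derivationD dD1) !(derivationD dD2).
rewrite !(derivationM dD1) !(derivationM dD2); ring.
Qed.

Section MonomialLeibniz.
Variables (K : fieldType) (M : conomType) (d : M -> {malg K[M]}).
Local Notation A := {malg K[M]}.

Definition mderivation (p : A) : A := mext (fun m c => c *: d m) p.

Fact mderivation_coef_additive m : {morph (fun c : K => c *: d m) : x y / x - y}.
Proof. by move=> x y; rewrite scalerBl. Qed.

Lemma mderivationU c m : mderivation << c *g m >> = c *: d m.
Proof. exact: (mextU (mderivation_coef_additive)). Qed.

Lemma mderivation_linear a p q :
  mderivation (a *: p + q) = a *: mderivation p + mderivation q.
Proof.
apply: (mext_linear (s := fun a (x : A) => a *: x)) => [b x y|m|m b c].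
- exact: scalerDr.
- exact: mderivation_coef_additive.
- by rewrite scalerA.
Qed.

Hypothesis dM : forall m1 m2, d (m1 * m2)%M = d m1 * << m2 >> + << m1 >> * d m2.

Lemma mderivation_derivation : is_Kderivation mderivation.
Proof.
have mderivationD : {morph mderivation : p q / p + q}.
  by move=> p q; rewrite -[p]scale1r mderivation_linear !scale1r.
have mderivation0 : mderivation 0 = 0 by rewrite /mderivation mext0.
split=> [|p q]; first exact: mderivation_linear.
elim/malg_ind: p => [|p1 p2 IH1 IH2|c1 m1].
- by rewrite !mul0r mderivation0 mul0r add0r.
- by rewrite mulrDl !mderivationD IH1 IH2 !mulrDl addrACA.
elim/malg_ind: q => [|q1 q2 IH1 IH2|c2 m2].
- by rewrite !mulr0 mderivation0 mulr0 addr0.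
- by rewrite mulrDr !mderivationD IH1 IH2 !mulrDr addrACA.
rewrite malgM_def fgmulUU !mderivationU dM (monalgUZ c1 m1) (monalgUZ c2 m2).
by rewrite scalerDr -!scalerAl -!scalerAr !scalerA addrC mulrC [c2 * c1]mulrC.
Qed.

End MonomialLeibniz.

Section MonomialDerivations.
Variables (K : fieldType) (V : choiceType).
Local Notation A := {malg K[{cmonom V}]}.
Implicit Types (m : {cmonom V}) (v : V) (p q : A).

Lemma cmonom_split m v : v \in finsupp m -> m = (ucm v * divcm m (ucm v))%M.
Proof.
move=> vm; have m_v : (0 < m v)%N by rewrite lt0n cmE_neq0.
apply/eqP/cmP => i; rewrite cmM divcmE cmU.
by case: eqP => [<-|_]; rewrite ?subn0 // addnC subnK.
Qed.

Lemma cmonom_ind (P : {cmonom V} -> Prop) :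
  P 1%M -> (forall v m, P m -> P (ucm v * m)%M) -> forall m, P m.
Proof.
move=> P1 PU; suff Pdeg n m : mdeg m = n -> P m by move=> m; exact: (Pdeg _ m erefl).
elim: n m => [|n IH] m dm; first by rewrite (mdeg_eq0I dm).
have /fset0Pn[v vm] : finsupp m != fset0.
  by apply/negP => /eqP m0; move: dm; rewrite mdegE m0 big_seq_fset0.
rewrite (cmonom_split vm); apply/PU/IH.
by move: dm; rewrite {1}(cmonom_split vm) mdegM mdegU => -[].
Qed.

Lemma derivation_eq (D1 D2 : A -> A) :
  is_Kderivation D1 -> is_Kderivation D2 ->
  (forall v, D1 << ucm v >> = D2 << ucm v >>) -> D1 =1 D2.
Proof.
move=> dD1 dD2 eqU.
(* Stated for arbitrary p and q: matching terms built from distinct monomials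
   makes Rocq compare them by unfolding, which does not terminate in practice. *)
have stepM p q : D1 p = D2 p -> D1 q = D2 q -> D1 (p * q) = D2 (p * q).
  by move=> ep eq; rewrite (derivationM dD1) (derivationM dD2) ep eq.
apply: (@malg_lin_eq _ _ _ (fun (a : K) (x : A) => a *: x)) => [w|a p q|a p q|].
- exact: scale1r.
- exact: (derivation_linear dD1).
- exact: (derivation_linear dD2).
elim/cmonom_ind => [|v m IH].
  by rewrite mpolyC1E (derivation1 dD1) (derivation1 dD2).
by rewrite malgUM; apply: stepM; [exact: eqU | exact: IH].
Qed.
Variable g : V -> A.

Definition mderiv_mon m : A :=
  \sum_(v <- finsupp m) (<< divcm m (ucm v) >> * g v) *+ m v.

Lemma mderiv_monEw (d : {fset V}) m : finsupp m `<=` d ->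
  mderiv_mon m = \sum_(v <- d) (<< divcm m (ucm v) >> * g v) *+ m v.
Proof.
move=> le_md; rewrite /mderiv_mon (big_fset_incl _ le_md) // => v _.
by rewrite -cmE_eq0 => /eqP ->.
Qed.

Lemma mderiv_monU v : mderiv_mon (ucm v) = g v.
Proof.
rewrite /mderiv_mon mdomU big_seq_fset1 cmUU.
suff -> : divcm (ucm v) (ucm v) = 1%M by rewrite mpolyC1E mul1r.
by apply/eqP/cmP => i; rewrite divcmE cm1 subnn.
Qed.

Lemma divcmM m1 m2 v : (0 < m1 v)%N ->
  divcm (m1 * m2)%M (ucm v) = (divcm m1 (ucm v) * m2)%M.
Proof.
move=> m1v; apply/eqP/cmP => i; rewrite !(divcmE, cmM) cmU.
by case: eqP => [<-|_]; rewrite ?subn0 // addnC -addnBA // addnC.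
Qed.

Lemma mderiv_mon_termM m1 m2 v :
  (<< divcm (m1 * m2)%M (ucm v) >> * g v) *+ (m1 * m2)%M v
  = (<< divcm m1 (ucm v) >> * g v) *+ m1 v * << m2 >>
    + << m1 >> * ((<< divcm m2 (ucm v) >> * g v) *+ m2 v).
Proof.
have termM m m' : (<< divcm (m * m')%M (ucm v) >> * g v) *+ m v
    = (<< divcm m (ucm v) >> * g v) *+ m v * << m' >>.
  have [->|mv] := posnP (m v); first by rewrite [LHS]mulr0n mulr0n mul0r.
  rewrite [in LHS]divcmM // [in LHS]malgUM; exact: mulrnA_mulrAC.
have e2 := termM m2 m1; rewrite mulmC in e2.
rewrite cmM [LHS]mulrnDr; congr (_ + _); first exact: termM.
exact: (etrans e2 (mulrC _ _)).
Qed.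

Lemma mderiv_monM m1 m2 :
  mderiv_mon (m1 * m2)%M = mderiv_mon m1 * << m2 >> + << m1 >> * mderiv_mon m2.
Proof.
have le_12 : finsupp (m1 * m2)%M `<=` finsupp m1 `|` finsupp m2 by rewrite mdomD.
rewrite [LHS](mderiv_monEw le_12) (mderiv_monEw (fsubsetUl _ (finsupp m2))).
rewrite (mderiv_monEw (fsubsetUr (finsupp m1) _)) [X in X + _]mulr_suml.
rewrite [X in _ + X]mulr_sumr -big_split; apply: eq_bigr => v _.
exact: mderiv_mon_termM.
Qed.

Lemma mderiv_mon_derivation : is_Kderivation (mderivation mderiv_mon).
Proof. exact: mderivation_derivation mderiv_monM. Qed.

End MonomialDerivations.

(** * Pre-Lie-Rinehart structures on free modules *)

Section PreLieJacobi.
Variables (K : fieldType) (R : comAlgType K) (L : lmodType R) (nabla : L -> L -> L).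
Hypothesis nablaBl : forall Z, {morph nabla^~ Z : X Y / X - Y}.
Hypothesis nablaBr : forall X, {morph nabla X : Y Z / Y - Z}.
Hypothesis nabla_preLie : forall X Y Z,
  nabla X (nabla Y Z) - nabla (nabla X Y) Z = nabla Y (nabla X Z) - nabla (nabla Y X) Z.

Lemma preLie_Jacobi X Y Z :
  bracket nabla X (bracket nabla Y Z) + bracket nabla Y (bracket nabla Z X)
  + bracket nabla Z (bracket nabla X Y) = 0.
Proof.
have regroup (V : zmodType) (a b c d e f g i j k l m : V) :
    (a - b - (c - d)) + (e - f - (g - i)) + (j - k - (l - m))
    = ((a - l) - (f - m)) + ((e - c) - (k - d)) + ((j - g) - (b - i)).
  by rewrite !opprB !addrA [LHS](ACl (1*12*11*6*5*4*3*10*9*8*7*2)).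
rewrite /bracket !(nablaBl, nablaBr) regroup.
by rewrite (nabla_preLie X Y Z) (nabla_preLie Y Z X) (nabla_preLie Z X Y) !subrr !addr0.
Qed.

End PreLieJacobi.

Section FreePreLieRinehart.
Variables (K : fieldType) (R : comAlgType K) (I : choiceType).
Local Notation L := {malg R[I]}.
Variables (D : I -> R -> R) (M : I -> I -> L).
Hypothesis D_derivation : forall k, is_Kderivation (D k).
Implicit Types (X Y Z : L) (f g h : R).

Definition anchor X f : R := \sum_(k <- msupp X) X@_k * D k f.

Definition connection X Y : L :=
  \sum_(k1 <- msupp X) \sum_(k2 <- msupp Y)
     X@_k1 *: (<< D k1 Y@_k2 *g k2 >> + Y@_k2 *: M k1 k2).

Fact anchor_coef_additive f k : {morph (fun c => c * D k f) : x y / x - y}.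
Proof. by move=> x y; rewrite mulrBl. Qed.

Lemma anchor_linear f X Y g : anchor (f *: X + Y) g = f * anchor X g + anchor Y g.
Proof.
apply: (@mext_linear _ _ _ (fun a x : R => a * x) _ (fun k c => c * D k g))
  => [a x y|k|k a c].
- exact: mulrDr.
- exact: anchor_coef_additive.
- by rewrite mulrA.
Qed.

Lemma anchorD X Y f : anchor (X + Y) f = anchor X f + anchor Y f.
Proof. by rewrite -[X]scale1r anchor_linear scale1r mul1r. Qed.

Lemma anchorZ g X f : anchor (g *: X) f = g * anchor X f.
Proof. by rewrite -[_ *: _]addr0 anchor_linear /anchor msupp0 big_nil addr0. Qed.

Lemma anchorB X Y f : anchor (X - Y) f = anchor X f - anchor Y f.
Proof. by rewrite anchorD -scaleN1r anchorZ mulN1r. Qed.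

Lemma anchor0l f : anchor 0 f = 0.
Proof. by rewrite /anchor msupp0 big_seq_fset0. Qed.

Lemma anchorU c k f : anchor << c *g k >> f = c * D k f.
Proof. exact: (mextU (anchor_coef_additive f)). Qed.

Lemma anchor_derivation X : is_Kderivation (anchor X).
Proof.
split=> [a f g|f g]; rewrite /anchor.
  rewrite scaler_sumr -big_split; apply: eq_bigr => k _.
  by rewrite (derivation_linear (D_derivation k)) mulrDr scalerAr.
rewrite mulr_suml mulr_sumr -big_split; apply: eq_bigr => k _.
by rewrite (derivationM (D_derivation k)) mulrDr mulrA mulrCA.
Qed.

Definition connection_at k Y : L :=
  mext (fun k2 c => << D k c *g k2 >> + c *: M k k2) Y.

Fact connection_coef_additive k k2 :
  {morph (fun c => << D k c *g k2 >> + c *: M k k2) : x y / x - y}.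
Proof.
by move=> x y; rewrite (derivationB (D_derivation k)) monalgUB scalerBl opprD addrACA.
Qed.

Lemma connection_atD k : {morph connection_at k : Y1 Y2 / Y1 + Y2}.
Proof. exact: mextD (connection_coef_additive k). Qed.

Lemma connection_atZ k f Y :
  connection_at k (f *: Y) = D k f *: Y + f *: connection_at k Y.
Proof.
elim/malg_ind: Y => [|Y1 Y2 IH1 IH2|c k2].
- by rewrite !scaler0 /connection_at mext0 scaler0 addr0.
- by rewrite scalerDr !connection_atD IH1 IH2 !scalerDr addrACA.
rewrite scale_malgU /connection_at !(mextU (connection_coef_additive k)).
rewrite (derivationM (D_derivation k)) monalgUD scalerDr scalerA.
by rewrite !scale_malgU addrA.
Qed.

Lemma connectionE X Y : connection X Y = mext (fun k c => c *: connection_at k Y) X.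
Proof. by apply: eq_bigr => k _; rewrite /connection_at /mext scaler_sumr. Qed.

Fact connection_row_additive Y k : {morph (fun c => c *: connection_at k Y) : x y / x - y}.
Proof. by move=> x y; rewrite scalerBl. Qed.

Lemma connection_linear f X1 X2 Y :
  connection (f *: X1 + X2) Y = f *: connection X1 Y + connection X2 Y.
Proof.
rewrite !connectionE; apply: (mext_linear (s := fun a x => a *: x)) => [a x y|k|k a c].
- exact: scalerDr.
- exact: connection_row_additive.
- by rewrite scalerA.
Qed.

Lemma connectionDl X1 X2 Y : connection (X1 + X2) Y = connection X1 Y + connection X2 Y.
Proof. by rewrite -[X1]scale1r connection_linear !scale1r. Qed.

Lemma connectionZl f X Y : connection (f *: X) Y = f *: connection X Y.
Proof.
by rewrite -[_ *: _]addr0 connection_linear /connection msupp0 big_nil addr0.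
Qed.

Lemma connectionBl X1 X2 Y : connection (X1 - X2) Y = connection X1 Y - connection X2 Y.
Proof. by rewrite connectionDl -scaleN1r connectionZl scaleN1r. Qed.

Lemma connection0l Y : connection 0 Y = 0.
Proof. by rewrite /connection msupp0 big_seq_fset0. Qed.

Lemma connectionU c k Y : connection << c *g k >> Y = c *: connection_at k Y.
Proof. by rewrite connectionE (mextU (connection_row_additive Y)). Qed.

Lemma connectionDr X Y1 Y2 : connection X (Y1 + Y2) = connection X Y1 + connection X Y2.
Proof.
rewrite !connectionE /mext -big_split; apply: eq_bigr => k _.
by rewrite connection_atD scalerDr.
Qed.

Lemma connectionBr X Y1 Y2 : connection X (Y1 - Y2) = connection X Y1 - connection X Y2.
Proof. by apply: (addIr (connection X Y2)); rewrite -connectionDr !subrK. Qed.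

Lemma connection0r X : connection X 0 = 0.
Proof. by have := connectionBr X 0 0; rewrite subrr => ->; rewrite subrr. Qed.

Lemma connectionZr X f Y : connection X (f *: Y) = anchor X f *: Y + f *: connection X Y.
Proof.
rewrite !connectionE /mext /anchor scaler_suml scaler_sumr -big_split.
apply: eq_bigr => k _; rewrite connection_atZ scalerDr !scalerA.
by rewrite [f * _]mulrC.
Qed.

Lemma connection_alg X a Y : connection X (a%:A *: Y) = a%:A *: connection X Y.
Proof. by rewrite connectionZr (derivation_alg (anchor_derivation X)) scale0r add0r. Qed.

Lemma connection_Klinear X a Y Z :
  connection X (Kscale a Y + Z) = Kscale a (connection X Y) + connection X Z.
Proof. by rewrite /Kscale connectionDr connection_alg. Qed.

Lemma connection_basis k1 k2 : connection << k1 >> << k2 >> = M k1 k2.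
Proof.
rewrite connectionU scale1r /connection_at (mextU (connection_coef_additive k1)).
by rewrite (derivation1 (D_derivation k1)) monalgU0 add0r scale1r.
Qed.

Lemma anchor_basis k f : anchor << k >> f = D k f.
Proof. by rewrite anchorU mul1r. Qed.

Definition associator X Y Z := connection X (connection Y Z) - connection (connection X Y) Z.

Definition anchor_associator h X Y := anchor X (anchor Y h) - anchor (connection X Y) h.

Lemma associatorDl X1 X2 Y Z :
  associator (X1 + X2) Y Z = associator X1 Y Z + associator X2 Y Z.
Proof. by rewrite /associator !connectionDl opprD addrACA. Qed.

Lemma associatorDm X Y1 Y2 Z :
  associator X (Y1 + Y2) Z = associator X Y1 Z + associator X Y2 Z.
Proof. by rewrite /associator connectionDl !connectionDr connectionDl opprD addrACA. Qed.

Lemma associatorDr X Y Z1 Z2 :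
  associator X Y (Z1 + Z2) = associator X Y Z1 + associator X Y Z2.
Proof. by rewrite /associator !connectionDr opprD addrACA. Qed.

Lemma associatorZl f X Y Z : associator (f *: X) Y Z = f *: associator X Y Z.
Proof. by rewrite /associator !connectionZl scalerBr. Qed.

Lemma associatorZm g X Y Z : associator X (g *: Y) Z = g *: associator X Y Z.
Proof.
rewrite /associator connectionZl (connectionZr X g (connection Y Z)).
rewrite (connectionZr X g Y) connection_linear (connectionZl g (connection X Y)).
by rewrite subrDl scalerBr.
Qed.

Lemma associatorZr h X Y Z :
  associator X Y (h *: Z) = anchor_associator h X Y *: Z
    + (anchor Y h *: connection X Z + anchor X h *: connection Y Z) + h *: associator X Y Z.
Proof.
have regroup (V : zmodType) (x1 x2 x3 x4 y1 y4 : V) :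
    x1 + x2 + (x3 + x4) - (y1 + y4) = x1 - y1 + (x2 + x3) + (x4 - y4).
  by rewrite [in LHS]addrA opprD [in LHS]addrA [LHS](ACl (1*5*(2*3)*(4*6))).
rewrite /associator /anchor_associator (connectionZr Y h Z) connectionDr.
rewrite (connectionZr X (anchor Y h) Z) (connectionZr X h (connection Y Z)).
rewrite (connectionZr (connection X Y) h Z).
rewrite scalerBl scalerBr; exact: regroup.
Qed.

Lemma anchor_associatorDl h X1 X2 Y :
  anchor_associator h (X1 + X2) Y = anchor_associator h X1 Y + anchor_associator h X2 Y.
Proof. by rewrite /anchor_associator connectionDl !anchorD opprD addrACA. Qed.

Lemma anchor_associatorDr h X Y1 Y2 :
  anchor_associator h X (Y1 + Y2) = anchor_associator h X Y1 + anchor_associator h X Y2.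
Proof.
rewrite /anchor_associator connectionDr !anchorD.
by rewrite (derivationD (anchor_derivation X)) opprD addrACA.
Qed.

Lemma anchor_associatorZl h f X Y :
  anchor_associator h (f *: X) Y = f * anchor_associator h X Y.
Proof. by rewrite /anchor_associator connectionZl !anchorZ mulrBr. Qed.

Lemma anchor_associatorZr h g X Y :
  anchor_associator h X (g *: Y) = g * anchor_associator h X Y.
Proof.
rewrite /anchor_associator (anchorZ g Y h) (derivationM (anchor_derivation X)).
rewrite connectionZr (anchor_linear (anchor X g) Y (g *: connection X Y) h).
by rewrite (anchorZ g (connection X Y) h); ring.
Qed.

Hypothesis D_comm : forall a b f,
  D a (D b f) - anchor (M a b) f = D b (D a f) - anchor (M b a) f.
Hypothesis M_assoc : forall a b c,
  connection << a >> (M b c) - connection (M a b) << c >>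
  = connection << b >> (M a c) - connection (M b a) << c >>.

Lemma anchor_associatorC h X Y : anchor_associator h X Y = anchor_associator h Y X.
Proof.
apply: malg_symmetric => [Z X1 X2|Z Y1 Y2|c1 c2 a b].
- exact: anchor_associatorDl.
- exact: anchor_associatorDr.
rewrite (monalgUZ c1 a) (monalgUZ c2 b) !anchor_associatorZl !anchor_associatorZr.
rewrite /anchor_associator !anchor_basis !connection_basis D_comm.
by rewrite mulrCA.
Qed.

Lemma associator_basisC a b Z : associator << a >> << b >> Z = associator << b >> << a >> Z.
Proof.
elim/malg_ind: Z => [|Z1 Z2 IH1 IH2|h c].
- by rewrite /associator !connection0r subrr.
- by rewrite !associatorDr IH1 IH2.
have Mabc : associator << a >> << b >> << c >> = associator << b >> << a >> << c >>.
  by rewrite /associator !connection_basis; exact: M_assoc.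
rewrite (monalgUZ h c) (associatorZr h << a >>) (associatorZr h << b >>).
rewrite (anchor_associatorC h << a >>) Mabc.
apply: (f_equal2 +%R); last reflexivity.
by apply: (f_equal2 +%R); [reflexivity | exact: addrC].
Qed.

Lemma associatorC X Y Z : associator X Y Z = associator Y X Z.
Proof.
apply: (malg_symmetric (B := fun X Y => associator X Y Z)) => [W X1 X2|W Y1 Y2|c1 c2 a b].
- exact: associatorDl.
- exact: associatorDm.
rewrite (monalgUZ c1 a) (monalgUZ c2 b) associatorZl associatorZm associatorZl associatorZm.
by rewrite associator_basisC !scalerA mulrC.
Qed.

Theorem free_pre_Lie_Rinehart : pre_Lie_Rinehart anchor connection.
Proof.
split.
- exact: anchor_derivation.
- exact: anchor_linear.
- exact: connection_Klinear.
- move=> a X Y Z; rewrite /bracket /Kscale connection_linear connection_Klinear.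
  by rewrite /Kscale scalerBr opprD addrACA.
- move=> a X Y Z; rewrite /bracket connection_Klinear /Kscale connection_linear.
  by rewrite scalerBr opprD addrACA.
- by move=> X; rewrite /bracket subrr.
- move=> X Y Z; apply: preLie_Jacobi => [W X1 X2|X1 Y1 Y2|X1 Y1 Z1].
  + exact: connectionBl.
  + exact: connectionBr.
  + exact: associatorC.
- move=> X Y f; rewrite /bracket anchorB; apply: subr_swap.
  exact: anchor_associatorC.
- move=> X f Y; rewrite /bracket connectionZr connectionZl.
  by rewrite [in RHS]scalerBr addrA.
- exact: associatorC.
Qed.
End FreePreLieRinehart.

(** * Weights, and the aromatic operations *)

Section Weight.
Variable C : finType.
Local Notation mon := {cmonom (var C)}.
Implicit Types (m : mon) (v : var C).

Lemma wtEw (d : {fset var C}) m : finsupp m `<=` d ->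
  wt m = \sum_(v <- d) (m v)%:Z * ((v.2)%:Z - 1).
Proof.
move=> le_md; rewrite /wt (big_fset_incl _ le_md) //= => v _.
by rewrite -cmE_eq0 => /eqP ->; rewrite mul0r.
Qed.

Lemma wtM m1 m2 : wt (m1 * m2)%M = wt m1 + wt m2.
Proof.
have le_12 : finsupp (m1 * m2)%M `<=` finsupp m1 `|` finsupp m2 by rewrite mdomD.
rewrite (wtEw le_12) (@wtEw _ m1 (fsubsetUl _ (finsupp m2))).
rewrite (@wtEw _ m2 (fsubsetUr (finsupp m1) _)) -big_split; apply: eq_bigr => v _.
by rewrite cmM PoszD mulrDl.
Qed.

Lemma wtU v : wt (ucm v) = (v.2)%:Z - 1.
Proof. by rewrite /wt mdomU big_seq_fset1 cmUU mul1r. Qed.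

Lemma wt_shift m v : v \in finsupp m ->
  wt (divcm m (ucm v) * ucm (shiftv v))%M = wt m + 1.
Proof.
move=> vm; rewrite wtM [in RHS](cmonom_split vm) !wtM !wtU /shiftv /=.
ring.
Qed.

Variable K : fieldType.
Local Notation Nb := (Nbar K C).

Definition wt_homog (w : int) (p : Nb) := forall m, m \in msupp p -> wt m = w.

Lemma wt_homog0 w : wt_homog w 0.
Proof. by move=> m; rewrite msupp0 in_fset0. Qed.

Lemma wt_homogD w p q : wt_homog w p -> wt_homog w q -> wt_homog w (p + q).
Proof.
move=> hp hq m /(fsubsetP (msuppD_le _ _)); rewrite in_fsetU => /orP[]; [exact: hp|exact: hq].
Qed.

Lemma wt_homogMn w p n : wt_homog w p -> wt_homog w (p *+ n).
Proof. by move=> hp m /(fsubsetP (msuppMn_le _ _)); exact: hp. Qed.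

Lemma wt_homogU m : wt_homog (wt m) << m >>.
Proof. by move=> m'; rewrite msuppU1 in_fset1 => /eqP ->. Qed.

Lemma wt_homogM w1 w2 p q : wt_homog w1 p -> wt_homog w2 q -> wt_homog (w1 + w2) (p * q).
Proof.
move=> hp hq m /msuppM_le [m1 [m2 [h1 h2 ->]]].
by rewrite wtM (hp _ h1) (hq _ h2).
Qed.

End Weight.

Section ConcreteDerivations.
Variables (K : fieldType) (C : finType).
Local Notation mon := {cmonom (var C)}.
Local Notation Nb := (Nbar K C).

Local Notation shift_gen := (fun v : var C => << ucm (shiftv v) >> : Nb).

Lemma deriv_mderivation : @Defs.deriv K C =1 mderivation (mderiv_mon shift_gen).
Proof.
move=> p; apply: eq_bigr => m _; congr (_ *: _); apply: eq_bigr => v _.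
by rewrite malgUM.
Qed.

Lemma deriv_derivation : is_Kderivation (@Defs.deriv K C).
Proof. exact: derivation_ext deriv_mderivation (mderiv_mon_derivation _). Qed.

Lemma act_S_derivation k : is_Kderivation (@act_S K C k).
Proof. exact: mderiv_mon_derivation. Qed.

Lemma wt_homog_deriv (m : mon) : wt_homog (wt m + 1) (Defs.deriv << m >> : Nb).
Proof.
rewrite deriv_mderivation mderivationU scale1r /mderiv_mon.
elim/big_rec: _ => [|v p _ hp]; first exact: wt_homog0.
apply: wt_homogD hp; have [vm|vm] := boolP (v \in finsupp m).
  by apply: wt_homogMn; rewrite -malgUM -(wt_shift vm); exact: wt_homogU.
by move: vm; rewrite -cmE_eq0 => /eqP ->; exact: wt_homog0.
Qed.

Lemma wt_homog_mul_deriv (m1 m2 : mon) :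
  wt_homog (wt m1 + wt m2 + 1) (<< m1 >> * Defs.deriv << m2 >> : Nb).
Proof. by rewrite -addrA; apply: wt_homogM; [exact: wt_homogU | exact: wt_homog_deriv]. Qed.

End ConcreteDerivations.

Section Embeddings.
Variables (K : fieldType) (C : finType).
Local Notation mon := {cmonom (var C)}.
Local Notation Nb := (Nbar K C).
Local Notation R := (multiaroma K C).
Local Notation L := (AM K C).
Implicit Types (m : mon) (p q : Nb).

(* By definition, toS1 is mext (fun m c => c *: toS1_mon m) and toL1 is mext toL1_coef. *)
Definition toS1_mon m : R :=
  if (insub m : option (M0mon C)) is Some k then << ucm k >> else 0.

Definition toL1_coef m (c : K) : L :=
  if (insub m : option (Mm1mon C)) is Some k then << c%:A *g k >> else 0.

Fact toS1_coef_additive m : {morph (fun c : K => c *: toS1_mon m) : x y / x - y}.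
Proof. by move=> x y; rewrite scalerBl. Qed.

Fact toL1_coef_additive m : {morph toL1_coef m : x y / x - y}.
Proof.
move=> x y; rewrite /toL1_coef; case: insub => [k|]; last by rewrite subrr.
by rewrite scalerBl monalgUB.
Qed.

Lemma toS1_linear a p q : toS1 (a *: p + q) = a *: toS1 p + toS1 q.
Proof.
apply: (@mext_linear _ _ _ (fun a (x : R) => a *: x) _ (fun m c => c *: toS1_mon m)).
- exact: scalerDr.
- exact: toS1_coef_additive.
- by move=> m b c; rewrite scalerA.
Qed.

Lemma toL1_linear a p q : toL1 (a *: p + q) = a%:A *: toL1 p + toL1 q.
Proof.
apply: (@mext_linear _ _ _ (fun a (x : L) => a%:A *: x) _ toL1_coef).
- by move=> b x y; rewrite scalerDr.
- exact: toL1_coef_additive.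
move=> m b c; rewrite /toL1_coef; case: insub => [k|]; last by rewrite scaler0.
rewrite (scale_malgU b%:A c%:A k) mulr_algl.
exact: (congr1 (fun x => << x *g k >>) (esym (scalerA b c 1))).
Qed.

Lemma toS1B p q : toS1 (p - q) = toS1 p - toS1 q.
Proof. by rewrite [in LHS]addrC -[in LHS]scaleN1r toS1_linear scaleN1r addrC. Qed.

Lemma toL1B p q : toL1 (p - q) = toL1 p - toL1 q.
Proof.
by rewrite [in LHS]addrC -[in LHS]scaleN1r toL1_linear scaleN1r scaleN1r addrC.
Qed.

Lemma toS1U m : toS1 << m >> = toS1_mon m.
Proof. exact: etrans (mextU toS1_coef_additive 1 m) (scale1r _). Qed.

Lemma toL1U m : toL1 << m >> = toL1_coef m 1.
Proof. exact: (mextU toL1_coef_additive). Qed.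

Lemma toS1_0 : toS1 (0 : Nb) = 0.
Proof. by rewrite /toS1 msupp0 big_seq_fset0. Qed.

Lemma toS1_wt w p : wt_homog w p -> w != 0 -> toS1 p = 0.
Proof.
move=> hp w0; apply: big1_seq => m /andP[_ mp].
by rewrite insubF ?scaler0 // /is_M0mon (hp _ mp) (negbTE w0).
Qed.

Lemma toL1_wt w p : wt_homog w p -> w != -1 -> toL1 p = 0.
Proof.
move=> hp w1; apply: big1_seq => m /andP[_ mp].
by rewrite insubF // /is_Mm1mon (hp _ mp) (negbTE w1).
Qed.

End Embeddings.

Section AromaticOperations.
Variables (K : fieldType) (C : finType).
Local Notation mon := {cmonom (var C)}.
Local Notation Nb := (Nbar K C).
Local Notation R := (multiaroma K C).
Local Notation L := (AM K C).
Local Notation d := (@Defs.deriv K C).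
Local Notation rho := (anchor (@act_S K C)).
Local Notation nab := (connection (@act_S K C) (@act_mon1 K C)).
Local Notation dS := (@act_S_derivation K C).
Local Notation M1 := (@act_mon1 K C).
Implicit Types (m : mon) (p q : Nb).

Lemma wt_Mm1 (a : Mm1mon C) : wt (val a) = -1.
Proof. exact/eqP/(valP a). Qed.

Lemma wt_M0 (k : M0mon C) : wt (val k) = 0.
Proof. by have /andP[/eqP] := valP k. Qed.

Lemma act_SU (a : Mm1mon C) (k : M0mon C) : act_S a << ucm k >> = @act_mon0 K C a k.
Proof.
change (mderivation (mderiv_mon (@act_mon0 K C a)) << ucm k >> = act_mon0 K a k).
by rewrite mderivationU scale1r mderiv_monU.
Qed.

Lemma act_S_toS1 (a : Mm1mon C) p : act_S a (toS1 p) = toS1 (<< val a >> * d p).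
Proof.
move: p; apply: (@malg_lin_eq _ _ _ (fun c (x : R) => c *: x)) => [w|c p q /=|c p q /=|m /=].
- exact: scale1r.
- by rewrite toS1_linear (derivation_linear (dS a)).
- rewrite [in LHS](derivation_linear (deriv_derivation K C)) [in LHS]mulrDr.
  by rewrite -[in LHS]scalerAr toS1_linear.
rewrite toS1U /toS1_mon; case: insubP => [k _ <-|m_M0]; first exact: act_SU.
rewrite (derivation0 (dS a)); have [->|m1] := eqVneq m 1%M.
  by rewrite mpolyC1E (derivation1 (deriv_derivation K C)) mulr0 toS1_0.
apply/esym/toS1_wt; first exact: wt_homog_mul_deriv.
by rewrite wt_Mm1 addrC addrA addrN add0r; move: m_M0; rewrite /is_M0mon m1 andbT.
Qed.

Lemma anchor_toL1 q (k : M0mon C) : rho (toL1 q) << ucm k >> = toS1 (q * d << val k >>).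
Proof.
move: q; apply: (@malg_lin_eq _ _ _ (fun c (x : R) => c *: x)) => [w|c p q /=|c p q /=|m /=].
- exact: scale1r.
- by rewrite toL1_linear anchor_linear mulr_algl.
- by rewrite [in LHS]mulrDl -[in LHS]scalerAl toS1_linear.
rewrite toL1U /toL1_coef; case: insubP => [a _ <-|m_Mm1].
  by rewrite scale1r anchor_basis act_SU.
apply: etrans (anchor0l _ _) _; apply/esym/toS1_wt.
  exact: wt_homog_mul_deriv.
rewrite wt_M0 addr0; move: m_Mm1; rewrite /is_Mm1mon; apply: contra => /eqP wt_m.
by apply/eqP; lia.
Qed.

Lemma connection_toL1r (a : Mm1mon C) q : nab << a >> (toL1 q) = toL1 (<< val a >> * d q).
Proof.
move: q; apply: (@malg_lin_eq _ _ _ (fun c (x : L) => c%:A *: x)) => [w|c p q /=|c p q /=|m /=].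
- by rewrite scale1r scale1r.
- by rewrite toL1_linear; exact: (connection_Klinear M1 dS).
- rewrite [in LHS](derivation_linear (deriv_derivation K C)) [in LHS]mulrDr.
  by rewrite -[in LHS]scalerAr toL1_linear.
rewrite toL1U /toL1_coef; case: insubP => [b _ <-|m_Mm1].
  by rewrite scale1r; exact: (connection_basis M1 dS).
apply: etrans (connection0r M1 dS _) _; apply/esym/toL1_wt.
  exact: wt_homog_mul_deriv.
rewrite wt_Mm1; move: m_Mm1; rewrite /is_Mm1mon; apply: contra => /eqP wt_m.
by apply/eqP; lia.
Qed.

Lemma connection_toL1l q (c : Mm1mon C) : nab (toL1 q) << c >> = toL1 (q * d << val c >>).
Proof.
move: q; apply: (@malg_lin_eq _ _ _ (fun c (x : L) => c%:A *: x)) => [w|b p q /=|b p q /=|m /=].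
- by rewrite scale1r scale1r.
- by rewrite toL1_linear; exact: connection_linear.
- by rewrite [in LHS]mulrDl -[in LHS]scalerAl toL1_linear.
rewrite toL1U /toL1_coef; case: insubP => [a _ <-|m_Mm1].
  by rewrite scale1r; exact: (connection_basis M1 dS).
apply: etrans (connection0l _ _ _) _; apply/esym/toL1_wt.
  exact: wt_homog_mul_deriv.
rewrite wt_Mm1; move: m_Mm1; rewrite /is_Mm1mon; apply: contra => /eqP wt_m.
by apply/eqP; lia.
Qed.

Lemma act_S_defect (a b : Mm1mon C) (k : M0mon C) :
  act_S a (act_S b << ucm k >>) - rho (M1 a b) << ucm k >>
  = toS1 (<< val a >> * << val b >> * d (d << val k >>)).
Proof.
rewrite act_SU act_S_toS1 anchor_toL1 -toS1B; apply: (congr1 (@toS1 K C)).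
exact: (derivationM_defect (deriv_derivation K C)).
Qed.

Lemma act_S_commutator (a b : Mm1mon C) f :
  act_S a (act_S b f) - rho (M1 a b) f = act_S b (act_S a f) - rho (M1 b a) f.
Proof.
apply/esym/subr_swap; apply: etrans _ (@anchorB _ _ _ (@act_S K C) _ _ _); move: f.
apply: (@derivation_eq _ _ (fun f => act_S a (act_S b f) - act_S b (act_S a f))
                           (rho (M1 a b - M1 b a))).
- exact: derivation_commutator (dS a) (dS b).
- exact: anchor_derivation dS _.
move=> k /=; apply: etrans _ (esym (@anchorB _ _ _ (@act_S K C) _ _ _)).
apply/esym/subr_swap.
rewrite [LHS]act_S_defect [RHS]act_S_defect.
exact: (congr1 (fun x => toS1 (x * _)) (mulrC _ _)).
Qed.

Lemma connection_defect (a b c : Mm1mon C) :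
  nab << a >> (M1 b c) - nab (M1 a b) << c >>
  = toL1 (<< val a >> * << val b >> * d (d << val c >>)).
Proof.
rewrite connection_toL1r connection_toL1l -toL1B; apply: (congr1 (@toL1 K C)).
exact: (derivationM_defect (deriv_derivation K C)).
Qed.

Lemma act_mon1_associator (a b c : Mm1mon C) :
  nab << a >> (M1 b c) - nab (M1 a b) << c >>
  = nab << b >> (M1 a c) - nab (M1 b a) << c >>.
Proof.
rewrite [LHS]connection_defect [RHS]connection_defect.
exact: (congr1 (fun x => toL1 (x * _)) (mulrC _ _)).
Qed.

End AromaticOperations.

Theorem proposition3p1 (K : fieldType) (C : finType) :
  @pre_Lie_Rinehart K (multiaroma K C) (AM K C)
    (@rhoAM K C) (@nablaAM K C).
Proof.
(* rhoAM and nablaAM are, by definition, the anchor and the connection of act_S and act_mon1. *)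
exact: free_pre_Lie_Rinehart (@act_S_derivation K C) (@act_S_commutator K C)
  (@act_mon1_associator K C).
Qed.
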